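(* Let $m \ge 2$, $n \ge 2$, and for $1 \le i \le m$ let $f_i(x) = x^T A_i x + c_i^T x + d_i$ be quadratics on $\mathbb{R}^n$ with $A_i$ symmetric, where $f_1(x) = \|x\|^2 - 1$. For $2 \le i \le m$ let $U_i > 0$ satisfy $|f_i(x)| \le U_i$ for all $x$ with $\|x\|^2 \le 2$. Then the system $f_i(x) \le 0$, $1 \le i \le m$, is feasible if and only if the following system in the real variables $v_0, x_1,\ldots,x_n, s_1,\ldots,s_m, w_2,\ldots,w_m$ is feasible: $$x^T A_i x + c_i^T v_0 x + d_i v_0^2 + s_i^2 = 0, \quad 1 \le i \le m,$$ $$\frac{s_i^2 + w_i^2}{U_i} - v_0^2 = 0, \quad 2 \le i \le m,$$ $$\|x\|^2 + s_1^2 + \sum_{i=2}^m \frac{s_i^2 + w_i^2}{U_i} + v_0^2 = m+1.$$ *)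

From mathcomp Require Import all_boot all_order all_algebra.
From mathcomp Require Import reals.
Set Implicit Arguments. Unset Strict Implicit. Unset Printing Implicit Defensive.
Import Order.TTheory GRing.Theory Num.Theory.
Local Open Scope ring_scope.

Definition sqnorm (R : realType) (n : nat) (x : 'cV[R]_n) : R :=
  \sum_(k < n) x k 0 ^+ 2.

Definition quadf (R : realType) (n : nat) (A : 'M[R]_n) (x : 'cV[R]_n) : R :=
  (x^T *m A *m x) 0 0.

Definition linf (R : realType) (n : nat) (c x : 'cV[R]_n) : R :=
  (c^T *m x) 0 0.

Definition quadratic (R : realType) (n : nat) (A : 'M[R]_n) (c : 'cV[R]_n) (d : R)
  (x : 'cV[R]_n) : R := quadf A x + linf c x + d.

(* Homogenize with a new variable v0: since f_1 = ||x||^2 - 1 is purely quadratic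
   plus a constant, its homogenized equation reads ||x||^2 + s_1^2 = v0^2, and the
   equations for i >= 2 say that each normalized slack term equals v0^2.  The
   normalization equation therefore collapses to (m + 1) v0^2 = m + 1, i.e.
   v0 = +-1, and v0 x is then a feasible point.  Conversely a feasible x lies in
   the unit ball, so with v0 = 1, s_i = sqrt (- f_i x) and
   w_i = sqrt (U_i + f_i x) every equation holds, the bound |f_i| <= U_i on the
   ball of radius sqrt 2 making U_i + f_i x nonnegative. *)
From mathcomp Require Import all_boot all_order all_algebra.
From mathcomp Require Import reals lra.
Set Implicit Arguments. Unset Strict Implicit. Unset Printing Implicit Defensive.
Import Order.TTheory GRing.Theory Num.Theory.
Local Open Scope ring_scope.

Section Scaling.
Variables (R : realType) (n : nat).
Implicit Types (A : 'M[R]_n) (c x : 'cV[R]_n) (a d : R).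

Lemma quadfZ A a x : quadf A (a *: x) = a ^+ 2 * quadf A x.
Proof.
by rewrite /quadf [(a *: x)^T]linearZ -!scalemxAl -scalemxAr scalerA mxE expr2.
Qed.

Lemma linfZ c a x : linf c (a *: x) = a * linf c x.
Proof. by rewrite /linf -scalemxAr mxE. Qed.

Lemma quadraticZ A c d a x :
  quadratic A c d (a *: x) = a ^+ 2 * quadf A x + a * linf c x + d.
Proof. by rewrite /quadratic quadfZ linfZ. Qed.

Lemma sqnormZ a x : sqnorm (a *: x) = a ^+ 2 * sqnorm x.
Proof.
by rewrite /sqnorm mulr_sumr; apply: eq_bigr => k _; rewrite mxE exprMn.
Qed.

(* Evaluating along the line through x at a = 0, 1, -1 separates the constant,
   linear and quadratic parts. *)
Lemma quadratic_eq_sqnorm_subr1 A c d :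
  (forall x, quadratic A c d x = sqnorm x - 1) ->
  d = -1 /\ forall x, quadf A x = sqnorm x /\ linf c x = 0.
Proof.
move=> hf; have e0 := hf (0 *: 0); rewrite quadraticZ sqnormZ in e0.
rewrite expr0n /= !mul0r !add0r in e0.
split=> // x; have e1 := hf (1 *: x); have e2 := hf (-1 *: x).
rewrite !quadraticZ !sqnormZ sqrrN expr1n !mul1r mulN1r in e1 e2.
split; lra.
Qed.

End Scaling.

Section OrdinalSums.
Variables (V : nmodType) (m : nat).

Lemma big_ord_val0 (F : 'I_m -> V) (m_gt0 : (0 < m)%N) :
  \sum_(i < m | val i == 0%N) F i = F (Ordinal m_gt0).
Proof.
case: m F m_gt0 => // k F k_gt0; rewrite big_mkcond big_ord_recl /=.
rewrite big1 ?addr0 //.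
by congr F; apply: val_inj.
Qed.

Lemma big_ord_val_gt0_const (F : 'I_m -> V) (a : V) :
  (forall i : 'I_m, (0 < val i)%N -> F i = a) ->
  \sum_(i < m | (0 < val i)%N) F i = a *+ m.-1.
Proof.
case: m F => [|k] F hF; first by rewrite big_ord0.
rewrite big_mkcond big_ord_recl /= add0r (eq_bigr (fun _ => a)).
  by rewrite sumr_const card_ord.
by move=> i _; rewrite hF.
Qed.

End OrdinalSums.

Section Lifting.
Variables (R : realType) (m n : nat).
Variables (A : 'I_m -> 'M[R]_n) (c : 'I_m -> 'cV[R]_n) (d U : 'I_m -> R).
Hypothesis m_gt0 : (0 < m)%N.
Hypothesis hf1 : forall i : 'I_m, val i = 0%N ->
  forall x : 'cV[R]_n, quadratic (A i) (c i) (d i) x = sqnorm x - 1.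
Hypothesis hU : forall i : 'I_m, (0 < val i)%N ->
  0 < U i /\
  forall x : 'cV[R]_n, sqnorm x <= 2 -> `|quadratic (A i) (c i) (d i) x| <= U i.

Local Notation f i := (quadratic (A i) (c i) (d i)).
Local Notation i0 := (Ordinal m_gt0).

Definition lifted_system (v0 : R) (x : 'cV[R]_n) (s w : 'I_m -> R) : Prop :=
  (forall i, quadf (A i) x + v0 * linf (c i) x + d i * v0 ^+ 2 + s i ^+ 2 = 0) /\
  (forall i : 'I_m, (0 < val i)%N -> (s i ^+ 2 + w i ^+ 2) / U i - v0 ^+ 2 = 0) /\
  sqnorm x + (\sum_(i < m | val i == 0%N) s i ^+ 2)
    + (\sum_(i < m | (0 < val i)%N) (s i ^+ 2 + w i ^+ 2) / U i) + v0 ^+ 2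
    = m%:R + 1.

Lemma natr_pred1 : m%:R = (m.-1)%:R + 1 :> R.
Proof. by rewrite natr1 prednK. Qed.

Lemma lifted_system_of_feasible (x : 'cV[R]_n) :
  (forall i, f i x <= 0) ->
  lifted_system 1 x (fun i => Num.sqrt (- f i x)) (fun i => Num.sqrt (U i + f i x)).
Proof.
move=> hx.
have sqr_s i : Num.sqrt (- f i x) ^+ 2 = - f i x by rewrite sqr_sqrtr // oppr_ge0.
have x_ball : sqnorm x <= 1 by have := hx i0; rewrite hf1 //; lra.
have sqr_w i : (0 < val i)%N -> Num.sqrt (U i + f i x) ^+ 2 = U i + f i x.
  move=> i_gt0; rewrite sqr_sqrtr //; have [_ /(_ x) bound] := hU i_gt0.
  have /andP[f_ge _] : - U i <= f i x <= U i by rewrite -ler_norml bound //; lra.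
  lra.
have slack i : (0 < val i)%N ->
    (Num.sqrt (- f i x) ^+ 2 + Num.sqrt (U i + f i x) ^+ 2) / U i = 1.
  move=> i_gt0; have [U_gt0 _] := hU i_gt0.
  by rewrite sqr_s sqr_w // addrCA addNr addr0 divff // gt_eqF.
split; [|split].
- by move=> i; rewrite sqr_s expr1n mul1r mulr1 /quadratic; lra.
- by move=> i i_gt0; rewrite slack // expr1n subrr.
- rewrite big_ord_val0 (big_ord_val_gt0_const slack) sqr_s hf1 // expr1n.
  rewrite natr_pred1; lra.
Qed.

Lemma lifted_system_v0 v0 x s w : lifted_system v0 x s w -> v0 ^+ 2 = 1.
Proof.
move=> [eq_f [eq_slack eq_sum]].
have [d0 /(_ x) [q0 l0]] := quadratic_eq_sqnorm_subr1 (hf1 (i := i0) erefl).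
have eq_f0 := eq_f i0; rewrite q0 l0 d0 in eq_f0.
rewrite big_ord_val0 (big_ord_val_gt0_const (a := v0 ^+ 2)) in eq_sum; last first.
  by move=> i i_gt0; apply/eqP; rewrite -subr_eq0; apply/eqP/eq_slack.
rewrite natr_pred1 -mulr_natr in eq_sum.
have : (v0 ^+ 2 - 1) * ((m.-1)%:R + 2) = 0 by nra.
move/eqP; rewrite mulf_eq0 => /orP[/eqP|/eqP]; first lra.
have : 0 <= (m.-1)%:R :> R by apply: ler0n.
lra.
Qed.

Lemma feasible_of_lifted_system v0 x s w :
  lifted_system v0 x s w -> forall i, f i (v0 *: x) <= 0.
Proof.
move=> sys i; have v0_sqr := lifted_system_v0 sys.
have [eq_f _] := sys; have := eq_f i; have := sqr_ge0 (s i).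
rewrite quadraticZ v0_sqr mul1r mulr1; lra.
Qed.

End Lifting.

Theorem corollary1 (R : realType) (m n : nat) (hm : (2 <= m)%N) (hn : (2 <= n)%N)
  (A : 'I_m -> 'M[R]_n) (c : 'I_m -> 'cV[R]_n) (d : 'I_m -> R) (U : 'I_m -> R)
  (hsym : forall i, (A i)^T = A i)
  (hf1 : forall i : 'I_m, val i = 0%N ->
           forall x : 'cV[R]_n, quadratic (A i) (c i) (d i) x = sqnorm x - 1)
  (hU : forall i : 'I_m, (0 < val i)%N ->
          0 < U i /\
          forall x : 'cV[R]_n, sqnorm x <= 2 -> `|quadratic (A i) (c i) (d i) x| <= U i) :
  (exists x : 'cV[R]_n, forall i, quadratic (A i) (c i) (d i) x <= 0) <->
  (exists (v0 : R) (x : 'cV[R]_n) (s w : 'I_m -> R),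
      (forall i, quadf (A i) x + v0 * linf (c i) x + d i * v0 ^+ 2 + s i ^+ 2 = 0) /\
      (forall i : 'I_m, (0 < val i)%N -> (s i ^+ 2 + w i ^+ 2) / U i - v0 ^+ 2 = 0) /\
      sqnorm x + (\sum_(i < m | val i == 0%N) s i ^+ 2)
        + (\sum_(i < m | (0 < val i)%N) (s i ^+ 2 + w i ^+ 2) / U i) + v0 ^+ 2
        = m%:R + 1).
Proof.
have m_gt0 : (0 < m)%N := ltnW hm.
split=> [[x hx] | [v0 [x [s [w sys]]]]].
- by do 4 eexists; exact: (lifted_system_of_feasible m_gt0 hf1 hU hx).
- by exists (v0 *: x); exact: (feasible_of_lifted_system m_gt0 hf1 sys).
Qed.
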